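(* Let $V$ be a Banach $\mathbb O$-bimodule, $T\in\mathscr B_{\mathcal{RO}}(V)$, $v\in\operatorname{Re}V$ and $\phi\in V^{*_{\mathbb O}}$. Set $g(s)=\phi\big((R_s-T)^{\circledcirc-}(v)\big)$ for $s\in\rho^*(T)$. Then for every $J\in\mathbb S$, $g$ is continuously differentiable on the open set $\rho_J^*(T)\subseteq\mathbb C_J$ and, writing $s=x+yJ$, satisfies $\frac{\partial g}{\partial x}(s)+\frac{\partial g}{\partial y}(s)\,J=0$ there; i.e. $g$ is right slice regular on the pull-back resolvent set.
   Context: $\mathbb O$ is the real octonion algebra with basis $e_0=1,\dots,e_7$; $\mathbb S=\{J\in\mathbb O:J^2=-1\}$, $\mathbb C_J=\mathbb R+\mathbb RJ$. An $\mathbb O$-bimodule is a real vector space $M$ with real-bilinear left and right multiplications by $\mathbb O$ (with $1x=x1=x$) whose associators $[p,q,x]=(pq)x-p(qx)$, $[p,x,q]=(px)q-p(xq)$, $[x,p,q]=(xp)q-x(pq)$ satisfy $[p,q,x]=[q,x,p]=[x,p,q]=-[q,p,x]$. Its real part is $\operatorname{Re}M=\{m: pm=mp,\ [p,q,m]=0\ \forall p,q\}$, and every $x$ decomposes uniquely as $\sum_ix_ie_i$ with $x_i\in\operatorname{Re}M$. A Banach $\mathbb O$-bimodule is one with a complete norm with $\|px\|=\|xp\|=|p|\|x\|$; $\mathbb O$ itself is one. $V^{*_{\mathbb O}}$ is the set of continuous octonionic linear functionals $\phi:V\to\mathbb O$ ($\phi(xp)=\phi(x)p$, equivalently $\phi(px)=p\phi(x)$).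 $\mathscr B_{\mathbb R}(V)$: bounded real-linear operators; invertible means invertible in $\mathscr B_{\mathbb R}(V)$; $R_sv=vs$. $\mathscr B_{\mathcal{RO}}(V)$: bounded real-linear $f$ with $\operatorname{Re}(f(x)p-f(xp))=0$ for all $p,x$, where $\operatorname{Re}x$ is the $e_0$-component above. For invertible $S$, $S^{\circledcirc-}=\operatorname{ext}(S^{-1}|_{\operatorname{Re}V})$ where $(\operatorname{ext}h)(\sum_ix_ie_i)=\sum_ih(x_i)e_i$ ($x_i\in\operatorname{Re}V$); in particular $S^{\circledcirc-}(v)=S^{-1}(v)$ for $v\in\operatorname{Re}V$. $S$ is $\mathbb C_J$-extendable power associative if $S^n(w\lambda)=S^n(w)\lambda$ for all $n\ge1$, $w\in\operatorname{Re}V$, $\lambda\in\mathbb C_J$. $\rho_J^*(T)=\{s\in\mathbb C_J: R_s-T$ invertible and $(R_s-T)^{-1}$ $\mathbb C_J$-extendable power associative$\}$ (open in $\mathbb C_J$), $\rho^*(T)=\bigcup_J\rho_J^*(T)$. *)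

From mathcomp Require Import all_boot all_order all_algebra.
From mathcomp Require Import all_classical all_reals all_analysis.
From Stdlib Require Import ClassicalEpsilon.
Import GRing.Theory Num.Theory.
Import numFieldNormedType.Exports.

Set Implicit Arguments.
Unset Strict Implicit.
Unset Printing Implicit Defensive.

Local Open Scope ring_scope.

(* The real octonions O = R^8 with basis e_0 = 1, e_1, ..., e_7.       *)
(* Multiplication table (Fano plane): for every cyclic triple (a,b,c)  *)
(* of the list below, e_a e_b = e_c, e_b e_c = e_a, e_c e_a = e_b and   *)
(* the reversed products carry a minus sign; e_i^2 = -1 (i >= 1).       *)
(* Triples: (i, i+1, i+3) mod 7.                                         *)

Notation oct R := 'rV[R]_8.

Definition fano_triples : seq (nat * nat * nat) :=
  [:: (1, 2, 4); (2, 3, 5); (3, 4, 6); (4, 5, 7); (5, 6, 1); (6, 7, 2); (7, 1, 3)]%N.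

Definition in_cyc (t : nat * nat * nat) (i j k : nat) : bool :=
  let: (a, b, c) := t in
  [|| (i, j, k) == (a, b, c), (i, j, k) == (b, c, a) | (i, j, k) == (c, a, b)].

Definition is_pos_triple (i j k : nat) : bool :=
  has (fun t => in_cyc t i j k) fano_triples.

(* coefficient of e_k in the product e_i e_j *)
Definition oct_coef (R : nzRingType) (i j k : 'I_8) : R :=
  if (i == 0 :> nat) then ((j == k)%:R)
  else if (j == 0 :> nat) then ((i == k)%:R)
  else if (i == j) then - ((k == 0 :> nat)%:R)
  else if is_pos_triple i j k then 1
  else if is_pos_triple j i k then -1
  else 0.

Definition oct_e (R : nzRingType) (i : 'I_8) : oct R := \row_(k < 8) ((k == i)%:R).

Definition oct1 (R : nzRingType) : oct R := oct_e R ord0.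

Definition oct_mul (R : nzRingType) (p q : oct R) : oct R :=
  \row_(k < 8) \sum_(i < 8) \sum_(j < 8) p ord0 i * q ord0 j * oct_coef R i j k.

Definition oct_norm (R : rcfType) (p : oct R) : R :=
  Num.sqrt (\sum_(i < 8) p ord0 i ^+ 2).

Definition oct_sphere (R : nzRingType) (J : oct R) : Prop :=
  oct_mul J J = - oct1 R.

Definition in_CJ (R : nzRingType) (J s : oct R) : Prop :=
  exists a b : R, s = a *: oct1 R + b *: J.

Section Bimodule.
Variables (R : realType) (V : completeNormedModType R).
Variables (lm : oct R -> V -> V) (rm : V -> oct R -> V).

Definition assoc_l (p q : oct R) (x : V) : V := lm (oct_mul p q) x - lm p (lm q x).
Definition assoc_m (p : oct R) (x : V) (q : oct R) : V := rm (lm p x) q - lm p (rm x q).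
Definition assoc_r (x : V) (p q : oct R) : V := rm (rm x p) q - rm x (oct_mul p q).

Definition is_Obimodule : Prop :=
  (forall p a x y, lm p (a *: x + y) = a *: lm p x + lm p y) /\
  (forall p q a x, lm (a *: p + q) x = a *: lm p x + lm q x) /\
  (forall p a x y, rm (a *: x + y) p = a *: rm x p + rm y p) /\
  (forall p q a x, rm x (a *: p + q) = a *: rm x p + rm x q) /\
  (forall x, lm (oct1 R) x = x) /\ (forall x, rm x (oct1 R) = x) /\
  (forall p q x,
      assoc_l p q x = assoc_m q x p /\
      assoc_m q x p = assoc_r x p q /\
      assoc_r x p q = - assoc_l q p x).

Definition is_Banach_Obimodule : Prop :=
  is_Obimodule /\
  (forall p x, `|lm p x| = oct_norm p * `|x|) /\
  (forall p x, `|rm x p| = oct_norm p * `|x|).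

Definition in_ReV (m : V) : Prop :=
  (forall p, lm p m = rm m p) /\ (forall p q, assoc_l p q m = 0).

Definition is_decomp (x : V) (xs : 'I_8 -> V) : Prop :=
  (forall i, in_ReV (xs i)) /\ x = \sum_(i < 8) rm (xs i) (oct_e R i).

Definition re_comp (x : V) : 'I_8 -> V :=
  epsilon (inhabits (fun _ : 'I_8 => (0 : V))) (is_decomp x).

Definition Re_part (x : V) : V := re_comp x ord0.

Definition ext (h : V -> V) (x : V) : V :=
  \sum_(i < 8) rm (h (re_comp x i)) (oct_e R i).

Definition is_Rlinear (f : V -> V) : Prop :=
  forall (a : R) x y, f (a *: x + y) = a *: f x + f y.

Definition is_bounded_op (f : V -> V) : Prop :=
  is_Rlinear f /\ exists C : R, forall x, `|f x| <= C * `|x|.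

Definition is_BRO (f : V -> V) : Prop :=
  is_bounded_op f /\ forall p x, Re_part (rm (f x) p - f (rm x p)) = 0.

Definition is_inverse_op (S S' : V -> V) : Prop :=
  is_bounded_op S' /\ (forall x, S' (S x) = x) /\ (forall x, S (S' x) = x).

Definition invertible_op (S : V -> V) : Prop :=
  is_bounded_op S /\ exists S', is_inverse_op S S'.

Definition inv_op (S : V -> V) : V -> V :=
  epsilon (inhabits (fun x : V => x)) (is_inverse_op S).

(* S^{circledcirc -} = ext (S^{-1} restricted to Re V) *)
Definition circ_inv (S : V -> V) : V -> V := ext (inv_op S).

Definition CJ_epa (J : oct R) (S : V -> V) : Prop :=
  forall (n : nat) (w : V) (lam : oct R), (0 < n)%N -> in_ReV w -> in_CJ J lam ->
    iter n S (rm w lam) = rm (iter n S w) lam.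

Definition Rs_minus (T : V -> V) (s : oct R) : V -> V := fun x => rm x s - T x.

Definition rhoJ (T : V -> V) (J s : oct R) : Prop :=
  in_CJ J s /\ invertible_op (Rs_minus T s) /\ CJ_epa J (inv_op (Rs_minus T s)).

Definition rho_star (T : V -> V) (s : oct R) : Prop :=
  exists J, oct_sphere J /\ rhoJ T J s.

Definition is_oct_functional (phi : V -> oct R) : Prop :=
  (forall x y, phi (x + y) = phi x + phi y) /\
  (forall x p, phi (rm x p) = oct_mul (phi x) p) /\
  continuous phi.

End Bimodule.

(* For real [v] the decomposition over [Re V] is trivial, so on the slice [s = x + yJ] the
   function is [G(x, y) = phi (B_s v)] with [B_s = (R_s - T)^-1].  The operators [R_s - T]
   depend affinely on [s]; a contraction argument keeps them invertible near a point of
   [rho_J^*(T)], with locally bounded inverses and the second resolvent identity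
   [B_{s+t} - B_s = - B_{s+t} R_t B_s].  Hence [G] is differentiable with partial derivatives
   [- phi (B_s^2 v)] and [- phi (B_s ((B_s v) J))], both locally Lipschitz.  Extendable power
   associativity turns [B_s ((B_s v) J)] into [(B_s^2 v) J], and the alternative law
   [(a J) J = a (J J) = - a] then yields [dG/dx + (dG/dy) J = 0]. *)

From HB Require Import structures.
From mathcomp Require Import all_boot all_order all_algebra.
From mathcomp Require Import all_classical all_reals all_analysis.
From mathcomp Require Import ring lra.
From Stdlib Require Import ClassicalEpsilon.
Import Order.TTheory GRing.Theory Num.Theory.
Import numFieldNormedType.Exports.
Local Open Scope ring_scope.

(* A copy of [oct_coef] over [int] with [nat] indices: big operators and
   finite types do not reduce under [vm_compute], [foldr] over [iota] does. *)
Definition oct_tab (i j k : nat) : int :=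
  if (i == 0)%N then ((j == k)%:R)
  else if (j == 0)%N then ((i == k)%:R)
  else if (i == j) then - ((k == 0)%N%:R)
  else if is_pos_triple i j k then 1
  else if is_pos_triple j i k then -1
  else 0.

Definition sum8 (f : nat -> int) : int := foldr (fun i a => f i + a) 0 (iota 0 8).
Definition all8 (P : nat -> bool) : bool := all P (iota 0 8).

Lemma all8P (P : nat -> bool) : all8 P -> forall i : 'I_8, P i.
Proof. by move=> /allP PP i; apply: PP; rewrite mem_iota /= ltn_ord. Qed.
Arguments all8P {P}.

Lemma sum8E (f : nat -> int) : \sum_(i < 8) f i = sum8 f.
Proof. by rewrite /sum8 -(big_mkord xpredT f) /index_iota /= !big_cons big_nil. Qed.

Lemma oct_tab_unit : all8 (fun i => all8 (fun k =>
  (oct_tab 0 i k == (i == k)%:R) && (oct_tab i 0 k == (i == k)%:R))).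
Proof. by vm_compute. Qed.

Lemma oct_tab_re : all8 (fun i => all8 (fun j =>
  oct_tab i j 0 == if i == j then (if i == 0 then 1 else -1) else 0)).
Proof. by vm_compute. Qed.

(* Symmetrised in the two right factors: the coefficient form of
   [(a u) u = a (u u)] for every [u]. *)
Lemma oct_tab_alternative : all8 (fun i => all8 (fun j => all8 (fun l => all8 (fun k =>
  sum8 (fun m => oct_tab i j m * oct_tab m l k) +
    sum8 (fun m => oct_tab i l m * oct_tab m j k) ==
  sum8 (fun m => oct_tab j l m * oct_tab i m k) +
    sum8 (fun m => oct_tab l j m * oct_tab i m k))))).
Proof. by vm_compute. Qed.

Lemma oct_tab_sandwich : all8 (fun a => all8 (fun m =>
  sum8 (fun k => sum8 (fun b => oct_tab a k b * oct_tab k b m))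
  == 6 * (a == m)%:R - 12 * ((a == 0) && (m == 0))%N%:R)).
Proof. by vm_compute. Qed.

Lemma sum_indicator {R : pzSemiRingType} {n} (f : 'I_n -> R) (i : 'I_n) :
  \sum_(k < n) (k == i)%:R * f k = f i.
Proof.
under eq_bigr => k _ do rewrite mulr_natl mulrb.
by rewrite -big_mkcond big_pred1_eq.
Qed.

Section OctonionRing.
Variable R : comNzRingType.
Implicit Types p q : oct R.

Lemma oct_coefE (i j k : 'I_8) : oct_coef R i j k = (oct_tab i j k)%:~R.
Proof.
rewrite /oct_coef /oct_tab; case: ifP => _; first by rewrite rmorph_nat.
case: ifP => _; first by rewrite rmorph_nat.
rewrite [i == j](_ : _ = (nat_of_ord i == j)) //.
case: ifP => _; first by rewrite rmorphN rmorph_nat.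
case: ifP => _; first by rewrite rmorph1.
by case: ifP => _; rewrite ?rmorphN ?rmorph1 ?rmorph0.
Qed.

Lemma oct_mulE p q k : oct_mul p q ord0 k =
  \sum_(i < 8) \sum_(j < 8) p ord0 i * q ord0 j * (oct_tab i j k)%:~R.
Proof. by rewrite mxE; apply: eq_bigr => i _; apply: eq_bigr => j _; rewrite oct_coefE. Qed.

Lemma oct_mul_el (i : 'I_8) q k :
  oct_mul (oct_e R i) q ord0 k = \sum_(j < 8) q ord0 j * (oct_tab i j k)%:~R.
Proof.
rewrite oct_mulE -(sum_indicator (fun a => \sum_(j < 8) q ord0 j * (oct_tab a j k)%:~R) i).
apply: eq_bigr => a _; rewrite mulr_sumr; apply: eq_bigr => j _.
by rewrite mxE mulrA.
Qed.

Lemma oct_mul_er p (j : 'I_8) k :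
  oct_mul p (oct_e R j) ord0 k = \sum_(i < 8) p ord0 i * (oct_tab i j k)%:~R.
Proof.
rewrite oct_mulE; apply: eq_bigr => i _.
rewrite -[RHS](sum_indicator (fun b => p ord0 i * (oct_tab i b k)%:~R) j).
by apply: eq_bigr => b _; rewrite mxE; ring.
Qed.

Lemma oct_mul1 p : oct_mul p (oct1 R) = p.
Proof.
apply/rowP => k; rewrite oct_mul_er -[RHS](sum_indicator (fun i => p ord0 i) k).
apply: eq_bigr => i _.
by rewrite (eqP (andP (all8P (all8P oct_tab_unit i) k)).2) rmorph_nat mulrC.
Qed.

Lemma oct_mulZr (c : R) p q : oct_mul p (c *: q) = c *: oct_mul p q.
Proof.
apply/rowP => k; rewrite !mxE mulr_sumr; apply: eq_bigr => i _.
by rewrite mulr_sumr; apply: eq_bigr => j _; rewrite mxE; ring.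
Qed.

Lemma oct_e_mul_re (i j : 'I_8) : oct_mul (oct_e R i) (oct_e R j) ord0 ord0 =
  if i == j then (if i == ord0 then 1 else -1) else 0.
Proof.
rewrite oct_mul_el (eq_bigr (fun b => (b == j)%:R * (oct_tab i b 0)%:~R)); last first.
  by move=> b _; rewrite mxE mulrC.
rewrite sum_indicator (eqP (all8P (all8P oct_tab_re i) j)).
rewrite [i == j](_ : _ = (nat_of_ord i == j)) // [i == ord0](_ : _ = (nat_of_ord i == 0)%N) //.
by case: (nat_of_ord i == j); case: (nat_of_ord i == 0)%N; rewrite ?rmorphN ?rmorph1 ?rmorph0.
Qed.

Lemma oct_sum_sandwich q :
  \sum_(k < 8) oct_mul (oct_e R k) (oct_mul q (oct_e R k)) =
  6%:R *: q - (12%:R * q ord0 ord0) *: oct1 R.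
Proof.
apply/rowP => m; rewrite summxE.
have tabE (a : 'I_8) : \sum_(k < 8) \sum_(b < 8) (oct_tab a k b * oct_tab k b m)%:~R =
    (6 * (a == m)%:R - 12 * ((nat_of_ord a == 0) && (nat_of_ord m == 0))%:R)%:~R :> R.
  rewrite -(eqP (all8P (all8P oct_tab_sandwich a) m)) -sum8E rmorph_sum.
  by apply: eq_bigr => k _; rewrite -sum8E rmorph_sum.
transitivity (\sum_(a < 8) q ord0 a *
    \sum_(k < 8) \sum_(b < 8) (oct_tab a k b * oct_tab k b m)%:~R).
  under eq_bigr => k _ do rewrite oct_mul_el.
  under eq_bigr => k _ do under eq_bigr => b _ do rewrite oct_mul_er mulr_suml.
  under [RHS]eq_bigr => a _ do rewrite mulr_sumr.
  under [RHS]eq_bigr => a _ do under eq_bigr => k _ do rewrite mulr_sumr.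
  rewrite [RHS]exchange_big; apply: eq_bigr => k _.
  rewrite [RHS]exchange_big; apply: eq_bigr => b _; apply: eq_bigr => a _.
  by rewrite rmorphM mulrA.
under eq_bigr => a _ do rewrite tabE rmorphB !rmorphM /= !rmorph_nat mulrBr.
rewrite !mxE sumrB; congr (_ - _).
  rewrite -(sum_indicator (fun a => 6%:R * q ord0 a) m).
  by apply: eq_bigr => a _; ring.
rewrite (bigD1 ord0) //= big1 ?addr0 => [|a]; first by rewrite mulrCA mulrA.
by rewrite -val_eqE /= => /negbTE -> /=; ring.
Qed.

End OctonionRing.

Lemma sum_quad_sym (R : numDomainType) n (u : 'I_n -> R) (E F : 'I_n -> 'I_n -> R) :
  (forall j l, E j l + E l j = F j l + F l j) ->
  \sum_(j < n) \sum_(l < n) u j * u l * E j l = \sum_(j < n) \sum_(l < n) u j * u l * F j l.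
Proof.
move=> EF.
have sum2 (E' : 'I_n -> 'I_n -> R) : 2 * (\sum_j \sum_l u j * u l * E' j l) =
    \sum_j \sum_l u j * u l * (E' j l + E' l j).
  rewrite mulr2n mulrDl mul1r {2}exchange_big /= -big_split /=.
  apply: eq_bigr => j _; rewrite -big_split /=; apply: eq_bigr => l _.
  by rewrite mulrDr [u l * u j]mulrC.
apply: (@mulfI _ 2); first by rewrite pnatr_eq0.
by rewrite !sum2; apply: eq_bigr => j _; apply: eq_bigr => l _; rewrite EF.
Qed.

Lemma oct_mul_alt (R : numDomainType) (a u : oct R) :
  oct_mul (oct_mul a u) u = oct_mul a (oct_mul u u).
Proof.
apply/rowP => k.
pose quad (E : 'I_8 -> 'I_8 -> 'I_8 -> R) :=
  \sum_(i < 8) a ord0 i * \sum_(j < 8) \sum_(l < 8) u ord0 j * u ord0 l * E i j l.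
have -> : oct_mul (oct_mul a u) u ord0 k =
    quad (fun i j l => (sum8 (fun m => oct_tab i j m * oct_tab m l k))%:~R).
  rewrite oct_mulE.
  transitivity (\sum_(m < 8) \sum_(l < 8) \sum_(i < 8) \sum_(j < 8)
      a ord0 i * u ord0 j * u ord0 l * ((oct_tab i j m)%:~R * (oct_tab m l k)%:~R)).
    apply: eq_bigr => m _; apply: eq_bigr => l _; rewrite oct_mulE !mulr_suml.
    by apply: eq_bigr => i _; rewrite !mulr_suml; apply: eq_bigr => j _; ring.
  under eq_bigr => m _ do rewrite exchange_big.
  under eq_bigr => m _ do under eq_bigr => i _ do rewrite exchange_big.
  rewrite exchange_big; apply: eq_bigr => i _; rewrite exchange_big mulr_sumr.
  apply: eq_bigr => j _; rewrite exchange_big mulr_sumr; apply: eq_bigr => l _.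
  rewrite -sum8E rmorph_sum !mulr_sumr; apply: eq_bigr => m _.
  by rewrite rmorphM /=; ring.
have -> : oct_mul a (oct_mul u u) ord0 k =
    quad (fun i j l => (sum8 (fun m => oct_tab j l m * oct_tab i m k))%:~R).
  rewrite oct_mulE; apply: eq_bigr => i _.
  transitivity (\sum_(m < 8) \sum_(j < 8) \sum_(l < 8)
      a ord0 i * u ord0 j * u ord0 l * ((oct_tab j l m)%:~R * (oct_tab i m k)%:~R)).
    apply: eq_bigr => m _; rewrite oct_mulE mulr_sumr !mulr_suml.
    by apply: eq_bigr => j _; rewrite mulr_sumr !mulr_suml; apply: eq_bigr => l _; ring.
  rewrite exchange_big mulr_sumr; apply: eq_bigr => j _.
  rewrite exchange_big mulr_sumr; apply: eq_bigr => l _.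
  rewrite -sum8E rmorph_sum !mulr_sumr; apply: eq_bigr => m _.
  by rewrite rmorphM /=; ring.
rewrite /quad; apply: eq_bigr => i _; congr (_ * _); apply: sum_quad_sym => j l.
rewrite -!rmorphD /=; congr (_%:~R); apply/eqP.
exact: (all8P (all8P (all8P (all8P oct_tab_alternative i) j) l) k).
Qed.

Section LinearMaps.
Context {R : pzRingType} {M N : lmodType R} {f : M -> N}.
Hypothesis f_lin : linear f.

Let fL : {linear M -> N} := HB.pack f (GRing.isLinear.Build R M N *:%R f f_lin).

Lemma linD x y : f (x + y) = f x + f y. Proof. exact: raddfD fL x y. Qed.
Lemma lin0 : f 0 = 0. Proof. exact: raddf0 fL. Qed.
Lemma linN x : f (- x) = - f x. Proof. exact: raddfN fL x. Qed.
Lemma linB x y : f (x - y) = f x - f y. Proof. exact: raddfB fL x y. Qed.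
Lemma linZ a x : f (a *: x) = a *: f x. Proof. exact: linearZ_LR fL a x. Qed.
Lemma lin_sum I (r : seq I) (P : pred I) (F : I -> M) :
  f (\sum_(i <- r | P i) F i) = \sum_(i <- r | P i) f (F i).
Proof. exact: (raddf_sum fL r P F). Qed.

End LinearMaps.

Section Bimodule.
Context {R : realType} {V : completeNormedModType R}.
Context {lm : oct R -> V -> V} {rm : V -> oct R -> V}.
Hypothesis HB : is_Obimodule lm rm.

Lemma lm_linear p : linear (lm p).
Proof. by move=> a x y; case: HB => + _; apply. Qed.

Lemma lm_linear_oct x : linear (lm^~ x).
Proof. by move=> a p q; case: HB => _ [+ _]; apply. Qed.

Lemma rm_linear p : linear (rm^~ p).
Proof. by move=> a x y; case: HB => _ [_ [+ _]]; apply. Qed.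

Lemma rm_linear_oct x : linear (rm x).
Proof. by move=> a p q; case: HB => _ [_ [_ [+ _]]]; apply. Qed.

Lemma lm1 x : lm (oct1 R) x = x.
Proof. by case: HB => _ [] _ [] _ [] _ []. Qed.

Lemma rm1 x : rm x (oct1 R) = x.
Proof. by case: HB => _ [] _ [] _ [] _ [] _ []. Qed.

Lemma ReV_lmA p q x : in_ReV lm rm x -> lm p (lm q x) = lm (oct_mul p q) x.
Proof. by move=> [_ /(_ p q) /eqP]; rewrite subr_eq0 => /eqP. Qed.

Lemma ReV_rmA p q x : in_ReV lm rm x -> rm (rm x p) q = rm x (oct_mul p q).
Proof.
case: HB => _ [] _ [] _ [] _ [] _ [] _ /(_ p q x) [_ [_ assoc]] [_ /(_ q p) re].
by apply/eqP; rewrite -subr_eq0; rewrite /assoc_r in assoc; rewrite assoc re oppr0.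
Qed.

Lemma ReV0 : in_ReV lm rm 0.
Proof.
split=> [p|p q]; first by rewrite (lin0 (lm_linear p)) (lin0 (rm_linear p)).
by rewrite /assoc_l !(lin0 (lm_linear _)) subrr.
Qed.

Lemma ReVB x y : in_ReV lm rm x -> in_ReV lm rm y -> in_ReV lm rm (x - y).
Proof.
move=> Hx Hy; split=> [p|p q].
  by rewrite (linB (lm_linear p)) (linB (rm_linear p)) Hx.1 Hy.1.
by rewrite /assoc_l !(linB (lm_linear _)) (ReV_lmA _ _ _ Hx) (ReV_lmA _ _ _ Hy) subrr.
Qed.

(* Kills the imaginary units (see [sandwich_re]); this is what separates the
   components of a decomposition over [Re V]. *)
Definition sandwich (x : V) : V :=
  6%:R *: x - \sum_(k < 8) lm (oct_e R k) (rm x (oct_e R k)).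

Lemma sandwich_linear : linear sandwich.
Proof.
move=> a x y; rewrite /sandwich scalerDr scalerA mulrC -scalerA scalerBr.
under eq_bigr => k _ do rewrite (rm_linear _) (lm_linear _).
by rewrite big_split /= -scaler_sumr opprD addrACA.
Qed.

Lemma sandwich_re x q : in_ReV lm rm x -> sandwich (rm x q) = (12%:R * q ord0 ord0) *: x.
Proof.
move=> Hx; rewrite /sandwich.
under eq_bigr => k _ do rewrite (ReV_rmA _ _ _ Hx) -Hx.1 (ReV_lmA _ _ _ Hx).
rewrite -(lin_sum (lm_linear_oct x)) -Hx.1 -(linZ (lm_linear_oct x)).
rewrite -(linB (lm_linear_oct x)) oct_sum_sandwich opprB addrC subrK.
by rewrite (linZ (lm_linear_oct x)) lm1.
Qed.

Lemma re_decomp_unique (d : 'I_8 -> V) : (forall i, in_ReV lm rm (d i)) ->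
  \sum_(i < 8) rm (d i) (oct_e R i) = 0 -> forall i, d i = 0.
Proof.
move=> Hd sum0 j.
have := congr1 (fun x => sandwich (rm x (oct_e R j))) sum0.
rewrite /= (lin0 (rm_linear _)) (lin0 sandwich_linear) (lin_sum (rm_linear _)).
rewrite (lin_sum sandwich_linear).
under eq_bigr => i _ do rewrite (ReV_rmA _ _ _ (Hd i)) sandwich_re // oct_e_mul_re.
rewrite (bigD1 j) //= eqxx big1 => [|i /negbTE ->]; last by rewrite mulr0 scale0r.
rewrite addr0 => /eqP; rewrite scaler_eq0 mulf_eq0 pnatr_eq0 /=.
by case: ifP => _; rewrite ?oppr_eq0 oner_eq0 /= => /eqP.
Qed.

Lemma re_comp_real x : in_ReV lm rm x ->
  forall i, re_comp lm rm x i = if i == ord0 then x else 0.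
Proof.
move=> Hx.
pose d (i : 'I_8) := if i == ord0 then x else 0.
have dec_d : is_decomp lm rm x d.
  split=> [i|]; first by rewrite /d; case: ifP => _ //; exact: ReV0.
  rewrite (bigD1 ord0) //= big1 ?addr0 /d ?eqxx ?rm1 // => i /negbTE ->.
  exact: (lin0 (rm_linear _)).
have [re_comp_ReV re_compE] := epsilon_spec (inhabits (fun _ : 'I_8 => (0 : V)))
  (is_decomp lm rm x) (ex_intro _ _ dec_d).
have diff0 := @re_decomp_unique (fun i => re_comp lm rm x i - d i).
move=> i; apply/eqP; rewrite -subr_eq0 diff0 // => [k|].
  exact: ReVB (re_comp_ReV k) (dec_d.1 k).
under eq_bigr => k _ do rewrite (linB (rm_linear _)).
by rewrite sumrB -re_compE -dec_d.2 subrr.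
Qed.

Lemma ext_real (h : V -> V) x : in_ReV lm rm x -> h 0 = 0 -> ext lm rm h x = h x.
Proof.
move=> Hx h0; rewrite /ext (bigD1 ord0) //= big1 => [|i /negbTE i0].
  by rewrite re_comp_real // eqxx rm1 addr0.
by rewrite re_comp_real // i0 h0 (lin0 (rm_linear _)).
Qed.

End Bimodule.

Lemma normr_fst_le {K : realDomainType} {A B : normedZmodType K} (t : A * B) : `|t.1| <= `|t|.
Proof. by rewrite prod_normE le_max lexx. Qed.

Lemma normr_snd_le {K : realDomainType} {A B : normedZmodType K} (t : A * B) : `|t.2| <= `|t|.
Proof. by rewrite prod_normE le_max lexx orbT. Qed.

Section PlaneFunctions.
Context {R : realType} {W : normedModType R}.
Local Notation U := (R^o * R^o)%type.

Section Lin2.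
Variables (a b : W).

Definition lin2 (t : U) : W := t.1 *: a + t.2 *: b.

Lemma lin2_linear : linear lin2.
Proof. by move=> c x y; rewrite /lin2 /= scalerDr !scalerA !scalerDl addrACA. Qed.

HB.instance Definition _ := GRing.isLinear.Build R U W *:%R lin2 lin2_linear.

Lemma lin2_continuous : continuous lin2.
Proof.
apply: (@bounded_linear_continuous _ _ _ lin2); apply/linear_boundedP; near=> r => t.
have r_ge : `|a| + `|b| <= r by near: r; apply: nbhs_pinfty_ge; exact: num_real.
rewrite (le_trans (ler_normD _ _)) // !normrZ (le_trans _ (ler_wpM2r (normr_ge0 t) r_ge)) //.
by rewrite mulrDl [_ * `|a|]mulrC [_ * `|b|]mulrC lerD // ler_wpM2l ?normr_fst_le ?normr_snd_le.
Unshelve. all: by end_near. Qed.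

End Lin2.

Lemma differentiable_quadratic_remainder (f : U -> W) (x : U) (a b : W) (K d : R) : 0 < d ->
  (forall t : U, `|t| < d -> `|f (x + t) - f x - lin2 a b t| <= K * `|t| ^+ 2) ->
  differentiable f x /\ 'd f x = lin2 a b :> (U -> W).
Proof.
move=> d0 rem_le.
have K1 : 0 < `|K| + 1 by rewrite ltr_wpDl.
have dfx : f \o shift x = cst (f x) + lin2 a b +o_ (0 : U) id.
  apply/eqaddoP => eps eps0; near=> h => /=.
  have hd : `|h| < d by near: h; exact: (@nbhs0_lt _ U _ d0).
  have he : `|h| < eps / (`|K| + 1) by near: h; exact: (@nbhs0_lt _ U _ (divr_gt0 eps0 K1)).
  rewrite [X in `|X|](_ : _ = f (x + h) - f x - lin2 a b h); last first.
    by rewrite !fctE /= [h + x]addrC opprD addrA.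
  apply: (le_trans (rem_le _ hd)); rewrite expr2 mulrA ler_wpM2r //.
  apply: (le_trans (ler_wpM2r (normr_ge0 _) (ler_norm K))).
  apply: (le_trans (ler_wpM2r (normr_ge0 _) (ler_wpDr ler01 (lexx `|K|)))).
  by rewrite mulrC -ler_pdivlMr // ltW.
have dL := diff_unique (lin2_continuous a b) dfx.
split=> //; apply/diff_locallyP; rewrite dL; split=> //; exact: lin2_continuous.
Unshelve. all: by end_near. Qed.

Lemma continuous_at_lipschitz (f : U -> W) (z : U) (K d : R) : 0 < d ->
  (forall w : U, `|w - z| < d -> `|f w - f z| <= K * `|w - z|) -> {for z, continuous f}.
Proof.
move=> d0 lip; apply/cvgrPdist_le => eps eps0.
have K1 : 0 < `|K| + 1 by rewrite ltr_wpDl.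
near=> w.
have wd : `|w - z| < d.
  near: w; apply: filterS (@near_ball _ U z d d0) => w; rewrite -ball_normE /= distrC //.
have we : `|w - z| < eps / (`|K| + 1).
  near: w; apply: filterS (@near_ball _ U z _ (divr_gt0 eps0 K1)) => w.
  by rewrite -ball_normE /= distrC.
rewrite distrC (le_trans (lip _ wd)) // (le_trans (ler_wpM2r _ (ler_norm K))) //.
apply: (le_trans (ler_wpM2r (normr_ge0 _) (ler_wpDr ler01 (lexx `|K|)))).
by rewrite mulrC -ler_pdivlMr // ltW.
Unshelve. all: by end_near. Qed.

End PlaneFunctions.

Lemma contraction_fixed_point {R : realType} {X : completeNormedModType R} (F : X -> X) (q : R) :
  0 <= q -> q < 1 -> (forall x y, `|F x - F y| <= q * `|x - y|) -> exists p, p = F p.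
Proof.
move=> q0 q1 F_lip.
have ctr : is_contraction (totalfun F : {fun [set: X] >-> [set: X]}).
  by exists (NngNum q0); split=> // -[x y] /= _; exact: F_lip.
by have [p _ Fp] := banach_fixed_point ctr closedT (ex_intro _ 0 I); exists p.
Qed.

Section Operators.
Context {R : realType} {V : completeNormedModType R}.
Implicit Types (S A K B : V -> V).

Lemma inverse_op_unique {S B B'} : is_inverse_op S B -> is_inverse_op S B' -> forall y, B y = B' y.
Proof. by move=> [_ [BS _]] [_ [_ SB']] y; rewrite -{1}(SB' y) BS. Qed.

(* Injectivity from an a priori bound, surjectivity from the contraction
   [x |-> A y - A (K x)]. *)
Lemma inverse_perturbation {S A K} {C e : R} :
  linear S -> linear A -> linear K -> 0 <= C -> 0 <= e ->
  (forall x, `|A x| <= C * `|x|) -> (forall x, A (S x) = x) -> (forall x, S (A x) = x) ->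
  (forall x, `|K x| <= e * `|x|) -> C * e <= 2^-1 ->
  exists B, is_inverse_op (fun x => S x + K x) B /\ (forall y, `|B y| <= 2 * C * `|y|).
Proof.
move=> LS LA LK C0 e0 A_le AS SA K_le Ce.
set S' := fun x => S x + K x.
have LS' : linear S'.
  by move=> a x y; rewrite /S' LS LK scalerDr addrACA.
have AK_le x : `|A (K x)| <= 2^-1 * `|x|.
  apply: (le_trans (A_le _)); apply: (le_trans (ler_wpM2l C0 (K_le x))).
  by rewrite mulrA ler_wpM2r.
have S'_ge x : `|x| <= 2 * C * `|S' x|.
  have xE : x = A (S' x) - A (K x) by rewrite /S' (linD LA) AS addrK.
  have x_le : `|x| <= C * `|S' x| + 2^-1 * `|x|.
    by rewrite {1}xE (le_trans (ler_normB _ _)) // lerD // A_le.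
  by rewrite -mulrA; move: x_le; set a := `|x|; set b := C * _; lra.
have S'_inj x y : S' x = S' y -> x = y.
  move=> S'xy; apply/eqP; rewrite -subr_eq0 -normr_le0.
  by apply: (le_trans (S'_ge _)); rewrite (linB LS') S'xy subrr normr0 mulr0.
have S'_surj y : exists x, S' x = y.
  have [x x_fix] : exists x, x = A y - A (K x).
    apply: (@contraction_fixed_point R V (fun x => A y - A (K x)) (2^-1)) => [||x1 x2].
    - by rewrite invr_ge0.
    - by rewrite invf_lt1 // ltr1n.
    rewrite [X in `|X|](_ : _ = A (K (x2 - x1))); last first.
      by rewrite (linB LK) (linB LA) opprD opprK addrACA subrr add0r addrC.
    by rewrite distrC AK_le.
  by exists x; rewrite /S' {1}x_fix (linB LS) !SA subrK.
have [B S'B] := boolp.choice S'_surj.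
have LB : linear B by move=> a x y; apply: S'_inj; rewrite LS' !S'B.
have B_le y : `|B y| <= 2 * C * `|y| by rewrite -{2}(S'B y); exact: S'_ge.
exists B; split=> //; split; first by split=> //; exists (2 * C).
by split=> // x; apply: S'_inj; rewrite S'B.
Qed.

End Operators.

Section Resolvent.
Context {R : realType} {V : completeNormedModType R}.
Context {lm : oct R -> V -> V} {rm : V -> oct R -> V}.
Hypothesis HV : is_Banach_Obimodule lm rm.
Context {T : V -> V} {J : oct R}.
Hypothesis HT : is_BRO lm rm T.
Local Notation U := (R^o * R^o)%type.

Let HB : is_Obimodule lm rm := HV.1.
Let rm_norm p x : `|rm x p| = oct_norm p * `|x| := HV.2.2 p x.
Let T_linear : linear T := HT.1.1.

Definition slice_pt (w : U) : oct R := w.1 *: oct1 R + w.2 *: J.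
Definition shifted (w : U) : V -> V := Rs_minus rm T (slice_pt w).
Definition regular (w : U) : Prop := invertible_op (shifted w).
Definition res (w : U) : V -> V := inv_op (shifted w).

(* [rm x (slice_pt t)], expanded so that its norm can be bounded without a
   triangle inequality for [oct_norm]. *)
Definition rmul_slice (t : U) (x : V) : V := t.1 *: x + t.2 *: rm x J.
Definition kJ : R := 1 + oct_norm J.

Lemma kJ_gt0 : 0 < kJ.
Proof. by rewrite ltr_pwDl // sqrtr_ge0. Qed.

Lemma shifted_linear w : linear (shifted w).
Proof.
move=> a x y; rewrite /shifted /Rs_minus T_linear (rm_linear HB) scalerBr.
by rewrite opprD addrACA.
Qed.

Lemma shifted_bounded w : exists C, forall x, `|shifted w x| <= C * `|x|.
Proof.
have [CT CT_le] := HT.1.2.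
exists (oct_norm (slice_pt w) + CT) => x; rewrite /shifted /Rs_minus.
by rewrite (le_trans (ler_normB _ _)) // mulrDl lerD // rm_norm.
Qed.

Lemma shiftedD w t x : shifted (w + t) x = shifted w x + rmul_slice t x.
Proof.
rewrite /shifted /Rs_minus /rmul_slice /slice_pt /= !scalerDl addrACA.
rewrite (linD (rm_linear_oct HB x)) (rm_linear_oct HB x t.1 (oct1 R) (t.2 *: J)).
by rewrite (linZ (rm_linear_oct HB x)) (rm1 HB) addrAC.
Qed.

Lemma rmul_slice_linear t : linear (rmul_slice t).
Proof.
move=> a x y; rewrite /rmul_slice (rm_linear HB) !scalerDr !scalerA.
by rewrite [a * _]mulrC [a * t.2]mulrC -!scalerA addrACA.
Qed.

Lemma rmul_slice_le t x : `|rmul_slice t x| <= kJ * `|t| * `|x|.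
Proof.
rewrite /rmul_slice (le_trans (ler_normD _ _)) // !normrZ rm_norm /kJ.
rewrite [X in _ <= X](_ : _ = `|t| * `|x| + `|t| * (oct_norm J * `|x|)); last by ring.
by rewrite lerD // ler_wpM2r ?mulr_ge0 ?sqrtr_ge0 ?normr_fst_le ?normr_snd_le.
Qed.

Lemma res_inverse {w} : regular w -> is_inverse_op (shifted w) (res w).
Proof.
move=> [_ [S' S'_inv]].
exact: (epsilon_spec (inhabits (fun x : V => x)) (is_inverse_op (shifted w)) (ex_intro _ _ S'_inv)).
Qed.

Lemma res_linear {w} : regular w -> linear (res w).
Proof. by move=> /res_inverse [[]]. Qed.

Lemma regular_near {w} : regular w -> exists2 C, 0 < C &
  (forall y, `|res w y| <= C * `|y|) /\
  forall t, `|t| < (2 * kJ * C)^-1 -> [/\ regular (w + t),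
    forall y, `|res (w + t) y| <= 2 * C * `|y|,
    forall y, res (w + t) y - res w y = - res (w + t) (rmul_slice t (res w y)) &
    forall y, `|res (w + t) y - res w y| <= 2 * C ^+ 2 * kJ * `|t| * `|y|].
Proof.
move=> reg_w; have [[res_lin [C0 C0_le]] [res_shifted shifted_res]] := res_inverse reg_w.
set C := Num.max C0 1.
have C_gt0 : 0 < C by rewrite lt_max ltr01 orbT.
have C_le y : `|res w y| <= C * `|y|.
  by rewrite (le_trans (C0_le y)) // ler_wpM2r // le_max lexx.
exists C => //; split=> // t t_small.
have CkJt : C * (kJ * `|t|) <= 2^-1.
  have kC_gt0 : 0 < 2 * kJ * C by rewrite !mulr_gt0 ?kJ_gt0.
  rewrite -(ltr_pM2l kC_gt0) mulfV ?gt_eqF // in t_small.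
  have -> : C * (kJ * `|t|) = 2^-1 * (2 * kJ * C * `|t|) by field.
  by rewrite -[X in _ <= X]mulr1 ler_wpM2l ?invr_ge0 ?ler0n // ltW.
have [B [B_inv B_le]] := inverse_perturbation (shifted_linear w) res_lin (rmul_slice_linear t)
  (ltW C_gt0) (mulr_ge0 (ltW kJ_gt0) (normr_ge0 _)) C_le res_shifted shifted_res
  (fun x => rmul_slice_le t x) CkJt.
have shiftedE : (fun x => shifted w x + rmul_slice t x) = shifted (w + t).
  by apply: funext => x; rewrite shiftedD.
rewrite shiftedE in B_inv.
have reg_wt : regular (w + t).
  by split; [split; [exact: shifted_linear | exact: shifted_bounded] | exists B].
have resE y : res (w + t) y = B y := inverse_op_unique (res_inverse reg_wt) B_inv y.
have [[res_lin' _] [res_shifted' _]] := res_inverse reg_wt.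
have res_le' y : `|res (w + t) y| <= 2 * C * `|y| by rewrite resE.
have res_sub y : res (w + t) y - res w y = - res (w + t) (rmul_slice t (res w y)).
  have yE : y = shifted (w + t) (res w y) - rmul_slice t (res w y).
    by rewrite shiftedD addrK shifted_res.
  by rewrite {1}yE (linB res_lin') res_shifted' addrAC subrr add0r.
split=> // y; rewrite res_sub normrN.
have kJt_ge0 : 0 <= kJ * `|t| := mulr_ge0 (ltW kJ_gt0) (normr_ge0 t).
have C2_ge0 : 0 <= 2 * C := mulr_ge0 (ler0n _ 2) (ltW C_gt0).
apply: (le_trans (res_le' _)); apply: (le_trans (ler_wpM2l C2_ge0 (rmul_slice_le _ _))).
apply: (le_trans (ler_wpM2l C2_ge0 (ler_wpM2l kJt_ge0 (C_le y)))).
by rewrite [X in X <= _](_ : _ = 2 * C ^+ 2 * kJ * `|t| * `|y|) //; ring.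
Qed.

Context {phi : V -> oct R} {v : V}.
Hypotheses (Hphi : is_oct_functional rm phi) (Hv : in_ReV lm rm v).

Lemma phi_linear : linear phi.
Proof.
move=> a x y; rewrite Hphi.1; congr (_ + _).
have -> : a *: x = rm x (a *: oct1 R) by rewrite (linZ (rm_linear_oct HB x)) (rm1 HB).
by rewrite Hphi.2.1 oct_mulZr oct_mul1.
Qed.

HB.instance Definition _ := GRing.isLinear.Build R V (oct R) *:%R phi phi_linear.

Lemma phi_bounded : exists2 M, 0 < M & forall y, `|phi y| <= M * `|y|.
Proof.
have /linear_boundedP/pinfty_ex_gt0 [M M_gt0 M_le] :=
  @continuous_linear_bounded R V (oct R) 0 phi (Hphi.2.2 0).
by exists M.
Qed.

Definition Gf (w : U) : oct R := phi (circ_inv lm rm (shifted w) v).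
Definition Gf_dx (w : U) : oct R := phi (- res w (res w v)).
Definition Gf_dy (w : U) : oct R := phi (- res w (rm (res w v) J)).

Lemma Gf_regular {w} : regular w -> Gf w = phi (res w v).
Proof.
by move=> reg_w; rewrite /Gf /circ_inv (ext_real HB) //; exact: (lin0 (res_linear reg_w)).
Qed.

Lemma Gf_differentiable {w} : regular w ->
  differentiable Gf w /\ 'd Gf w = lin2 (Gf_dx w) (Gf_dy w) :> (U -> oct R).
Proof.
move=> reg_w; have [C C_gt0 [C_le near_w]] := regular_near reg_w.
have [M M_gt0 M_le] := phi_bounded.
have res_lin := res_linear reg_w.
apply: (@differentiable_quadratic_remainder _ _ _ _ _ _
  (M * (2 * C ^+ 3 * kJ ^+ 2 * `|v|)) (2 * kJ * C)^-1).
  by rewrite invr_gt0 !mulr_gt0 ?kJ_gt0.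
move=> t t_small; have [reg_wt res_le' res_sub _] := near_w t t_small.
set y := rmul_slice t (res w v).
have remE : Gf (w + t) - Gf w - lin2 (Gf_dx w) (Gf_dy w) t =
    phi (res (w + t) (rmul_slice t (res w y))).
  have lin2E : lin2 (Gf_dx w) (Gf_dy w) t = - phi (res w y).
    rewrite /lin2 /Gf_dx /Gf_dy -!(linZ phi_linear) -(linD phi_linear) -(linN phi_linear).
    by congr phi; rewrite /y /rmul_slice (linD res_lin) !(linZ res_lin) opprD -!scalerN.
  rewrite lin2E opprK !Gf_regular // -(linB phi_linear) -(linD phi_linear) res_sub.
  by rewrite addrC -opprB res_sub opprK.
rewrite remE; apply: (le_trans (M_le _)).
have kJt_ge0 : 0 <= kJ * `|t| := mulr_ge0 (ltW kJ_gt0) (normr_ge0 t).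
have C_ge0 := ltW C_gt0.
have b1 := le_trans (rmul_slice_le t _) (ler_wpM2l kJt_ge0 (C_le v)).
have b2 := le_trans (C_le _) (ler_wpM2l C_ge0 b1).
have b3 := le_trans (rmul_slice_le t _) (ler_wpM2l kJt_ge0 b2).
have b4 := le_trans (res_le' _) (ler_wpM2l (mulr_ge0 (ler0n _ 2) C_ge0) b3).
apply: (le_trans (ler_wpM2l (ltW M_gt0) b4)).
by rewrite [X in X <= _](_ : _ = M * (2 * C ^+ 3 * kJ ^+ 2 * `|v|) * `|t| ^+ 2) //; ring.
Qed.

Lemma Gf_partials {w} : regular w ->
  'D_((1 : R^o), (0 : R^o)) Gf w = Gf_dx w /\ 'D_((0 : R^o), (1 : R^o)) Gf w = Gf_dy w.
Proof.
move=> reg_w; have [Gf_diff dGf] := Gf_differentiable reg_w.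
by rewrite !deriveE // dGf /lin2 /= !scale1r !scale0r addr0 add0r.
Qed.

Lemma res_compose_lipschitz {z} {L : V -> V} {c : R} : regular z -> linear L -> 0 <= c ->
  (forall x, `|L x| <= c * `|x|) -> exists2 d, 0 < d & exists K, forall t, `|t| < d ->
  regular (z + t) /\ `|res (z + t) (L (res (z + t) v)) - res z (L (res z v))| <= K * `|t|.
Proof.
move=> reg_z L_lin c_ge0 L_le; have [C C_gt0 [C_le near_z]] := regular_near reg_z.
exists (2 * kJ * C)^-1; first by rewrite invr_gt0 !mulr_gt0 ?kJ_gt0.
exists (6 * C ^+ 3 * c * kJ * `|v|) => t t_small.
have [reg_zt res_le' _ res_sub_le] := near_z t t_small; split=> //.
set x' := res (z + t) v; set x := res z v.
have splitE : res (z + t) (L x') - res z (L x) =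
    (res (z + t) (L x') - res z (L x')) + res z (L (x' - x)).
  by rewrite (linB L_lin) (linB (res_linear reg_z)) addrA subrK.
rewrite splitE (le_trans (ler_normD _ _)) //.
have C_ge0 := ltW C_gt0.
have k_ge0 : 0 <= 2 * C ^+ 2 * kJ * `|t|.
  exact: mulr_ge0 (mulr_ge0 (mulr_ge0 (ler0n _ 2) (sqr_ge0 C)) (ltW kJ_gt0)) (normr_ge0 t).
have b1 : `|res (z + t) (L x') - res z (L x')| <= 2 * C ^+ 2 * kJ * `|t| * (c * (2 * C * `|v|)).
  by rewrite (le_trans (res_sub_le _)) // ler_wpM2l // (le_trans (L_le _)) // ler_wpM2l // res_le'.
have b2 : `|res z (L (x' - x))| <= C * (c * (2 * C ^+ 2 * kJ * `|t| * `|v|)).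
  by rewrite (le_trans (C_le _)) // ler_wpM2l // (le_trans (L_le _)) // ler_wpM2l // res_sub_le.
apply: (le_trans (lerD b1 b2)).
by rewrite [X in X <= _](_ : _ = 6 * C ^+ 3 * c * kJ * `|v| * `|t|) //; ring.
Qed.

Lemma continuous_at_res_compose {z} {F : U -> oct R} (L : V -> V) (c : R) :
  regular z -> linear L -> 0 <= c -> (forall x, `|L x| <= c * `|x|) ->
  (forall w, regular w -> F w = phi (- res w (L (res w v)))) -> {for z, continuous F}.
Proof.
move=> reg_z L_lin c_ge0 L_le FE.
have [d d_gt0 [K lip]] := res_compose_lipschitz reg_z L_lin c_ge0 L_le.
have [M M_gt0 M_le] := phi_bounded.
apply: (@continuous_at_lipschitz _ _ _ _ (M * K) _ d_gt0) => w wz.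
have [reg_w X_le] := lip _ wz; rewrite addrC subrK in reg_w X_le.
rewrite !FE // -(linB phi_linear) opprK addrC (le_trans (M_le _)) // -mulrA distrC.
by apply: ler_wpM2l => //; exact: ltW.
Qed.

Lemma Gf_partials_continuous {z} : regular z ->
  {for z, continuous (fun w => 'D_((1 : R^o), (0 : R^o)) Gf w)} /\
  {for z, continuous (fun w => 'D_((0 : R^o), (1 : R^o)) Gf w)}.
Proof.
move=> reg_z; split.
  apply: (continuous_at_res_compose id 1) => // [x|w reg_w]; first by rewrite mul1r.
  by rewrite (Gf_partials reg_w).1.
apply: (continuous_at_res_compose (rm^~ J) (oct_norm J)) => // [|||w reg_w].
- exact: rm_linear HB J.
- exact: sqrtr_ge0.
- by move=> x; rewrite rm_norm.
- by rewrite (Gf_partials reg_w).2.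
Qed.

Lemma Gf_cauchy_riemann {z} : oct_sphere J -> regular z -> CJ_epa lm rm J (res z) ->
  Gf_dx z + oct_mul (Gf_dy z) J = 0.
Proof.
move=> JJ reg_z epa.
have J_CJ : in_CJ J J by exists 0, 1; rewrite scale0r add0r scale1r.
have /= res_vJ := epa 1%N v J isT Hv J_CJ.
have /= res2_vJ := epa 2%N v J isT Hv J_CJ.
have mulN1 q : oct_mul q (- oct1 R) = - q by rewrite -scaleN1r oct_mulZr oct_mul1 scaleN1r.
rewrite /Gf_dx /Gf_dy -res_vJ res2_vJ -(linN (rm_linear HB J)) Hphi.2.1 oct_mul_alt JJ mulN1.
by rewrite subrr.
Qed.

End Resolvent.

Theorem mainTheorem8 (R : realType) (V : completeNormedModType R)
    (lm : oct R -> V -> V) (rm : V -> oct R -> V)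
    (HV : is_Banach_Obimodule lm rm)
    (T : V -> V) (HT : is_BRO lm rm T)
    (v : V) (Hv : in_ReV lm rm v)
    (phi : V -> oct R) (Hphi : is_oct_functional rm phi)
    (J : oct R) (HJ : oct_sphere J) :
  let g : oct R -> oct R := fun s => phi (circ_inv lm rm (Rs_minus rm T s) v) in
  let G : (R^o * R^o)%type -> oct R := fun z => g (z.1 *: oct1 R + z.2 *: J) in
  let U : (R^o * R^o)%type -> Prop := fun z => rhoJ lm rm T J (z.1 *: oct1 R + z.2 *: J) in
  forall z : (R^o * R^o)%type, U z ->
    [/\ differentiable G z,
        {for z, continuous (fun w => 'D_((1 : R^o), (0 : R^o)) G w)},
        {for z, continuous (fun w => 'D_((0 : R^o), (1 : R^o)) G w)} &
        'D_((1 : R^o), (0 : R^o)) G z + oct_mul ('D_((0 : R^o), (1 : R^o)) G z) J = 0].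
Proof.
move=> g G U z [_ [reg_z epa]].
have [dxE dyE] := Gf_partials HV HT Hphi Hv reg_z.
split.
- exact: (Gf_differentiable HV HT Hphi Hv reg_z).1.
- exact: (Gf_partials_continuous HV HT Hphi Hv reg_z).1.
- exact: (Gf_partials_continuous HV HT Hphi Hv reg_z).2.
- rewrite dxE dyE; apply: (Gf_cauchy_riemann HV Hphi Hv HJ reg_z); exact: epa.
Qed.
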